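(* Let $\delta\ge0$, let $\rho\in D_\delta$ and let $\sigma\in[0,1+\delta)$. Then there is $C$ such that $E_{n,\sigma}\le C\Delta_n^{\sigma/(1+\delta)}$ for all $n\ge0$.
   Context: An irrational $\rho$ is in $D_\delta$ if there is $C>0$ with $|\rho-p/q|\ge Cq^{-2-\delta}$ for all rationals $p/q$. Write $\rho\in(0,1)$ as a continued fraction $\rho=[k_1,k_2,\dots]$ with convergents $p_n/q_n$, where $p_0=0,q_0=1,p_{-1}=1,q_{-1}=0$, $p_n=k_np_{n-1}+p_{n-2}$, $q_n=k_nq_{n-1}+q_{n-2}$. Set $\Delta_n=|q_n\rho-p_n|$ for $n\ge-1$ (so $\Delta_{-1}=1$), and $E_{n,\sigma}=\sum_{k=0}^n\frac{\Delta_n}{\Delta_{n-k}}\Delta_{n-k-1}^\sigma$. *)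

From Stdlib Require Import Reals Lra ZArith.
Open Scope R_scope.

Definition irrational (rho : R) : Prop :=
  ~ exists (p q : Z), q <> 0%Z /\ rho = IZR p / IZR q.

Definition in_D (delta rho : R) : Prop :=
  irrational rho /\
  exists C, 0 < C /\
    forall (p : Z) (q : nat), (1 <= q)%nat ->
      Rabs (rho - IZR p / INR q) >= C * Rpower (INR q) (- 2 - delta).

Fixpoint cf_x (rho : R) (n : nat) : R :=
  match n with
  | O => rho
  | S m => / cf_x rho m - IZR (Int_part (/ cf_x rho m))
  end.

(* partial quotients: cf_k rho (S n) = k_{n+1} = floor(1 / x_n), so
   rho = [k_1, k_2, ...]. *)
Definition cf_k (rho : R) (n : nat) : R :=
  match n with
  | O => 0
  | S m => IZR (Int_part (/ cf_x rho m))
  end.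

(* cf_pq rho n = ((p_{n-1}, q_{n-1}), (p_n, q_n)),
   with p_{-1}=1, q_{-1}=0, p_0=0, q_0=1 and
   p_n = k_n p_{n-1} + p_{n-2}, q_n = k_n q_{n-1} + q_{n-2}. *)
Fixpoint cf_pq (rho : R) (n : nat) : (R * R) * (R * R) :=
  match n with
  | O => ((1, 0), (0, 1))
  | S m =>
      let '((a, b), (c, d)) := cf_pq rho m in
      ((c, d), (cf_k rho (S m) * c + a, cf_k rho (S m) * d + b))
  end.

Definition cf_p (rho : R) (n : nat) : R := fst (snd (cf_pq rho n)).
Definition cf_q (rho : R) (n : nat) : R := snd (snd (cf_pq rho n)).

Definition cf_Delta (rho : R) (n : nat) : R := Rabs (cf_q rho n * rho - cf_p rho n).

(* Delta_prev rho n = Delta_{n-1} (for n >= 0, so Delta_prev rho 0 = Delta_{-1} = 1) *)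
Definition Delta_prev (rho : R) (n : nat) : R :=
  let '((a, b), _) := cf_pq rho n in Rabs (b * rho - a).

Definition E_ns (rho sigma : R) (n : nat) : R :=
  sum_f_R0 (fun k => cf_Delta rho n / cf_Delta rho (n - k)
                      * Rpower (Delta_prev rho (n - k)) sigma) n.

From Stdlib Require Import Reals Lra Lia Psatz ZArith.
Open Scope R_scope.

(* Writing x_n for the Gauss-map iterates of rho, one has Delta_n = x_n Delta_{n-1} with
   0 < x_n < 1 and x_n x_{n+1} <= 1/2, so Delta decreases and halves every two steps.
   The Diophantine condition, combined with q_n Delta_{n-1} <= 1, gives
   Delta_n >= c Delta_{n-1}^(1+delta).  With s = sigma/(1+delta) < 1 this bounds the
   k-th term of E_{n,sigma} by c^(-s) Delta_n^s (Delta_n/Delta_{n-k})^(1-s), and these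
   ratios are dominated by a geometric series of ratio 2^(-(1-s)) every two steps. *)

Definition is_int (x : R) : Prop := exists z : Z, x = IZR z.

Lemma is_int_plus x y : is_int x -> is_int y -> is_int (x + y).
Proof. intros [zx ->] [zy ->]. exists (zx + zy)%Z. now rewrite plus_IZR. Qed.

Lemma is_int_mult x y : is_int x -> is_int y -> is_int (x * y).
Proof. intros [zx ->] [zy ->]. exists (zx * zy)%Z. now rewrite mult_IZR. Qed.

Lemma Rpower_gt0 x y : 0 < Rpower x y.
Proof. exact (exp_pos _). Qed.

Lemma Rpower_1_l y : Rpower 1 y = 1.
Proof. unfold Rpower. now rewrite ln_1, Rmult_0_r, exp_0. Qed.

Lemma Rpower_inv x y : 0 < x -> Rpower (/ x) y = Rpower x (- y).
Proof. intros Hx. unfold Rpower. rewrite ln_Rinv by exact Hx. f_equal. ring. Qed.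

Lemma exp_ln_minus x y : 0 < x -> 0 < y -> exp (ln x - ln y) = x / y.
Proof.
  intros Hx Hy. unfold Rminus. rewrite exp_plus, exp_Ropp, !exp_ln by assumption.
  reflexivity.
Qed.

Lemma div_mul_Rpower_le A B P c e s : 0 < e -> 0 <= s ->
  0 < A -> 0 < B -> 0 < P -> 0 < c -> c * Rpower P e <= B ->
  A / B * Rpower P (s * e) <= Rpower (A / B) (1 - s) * (Rpower c (- s) * Rpower A s).
Proof.
  intros He Hs HA HB HP Hc Hle.
  assert (Hpow : Rpower P (s * e) <= Rpower (B / c) s).
  { rewrite Rmult_comm, <- Rpower_mult. apply Rle_Rpower_l; [exact Hs|].
    split; [apply Rpower_gt0|]. apply (Rmult_le_reg_l c); [exact Hc|]. field_simplify; lra. }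
  apply Rle_trans with (A / B * Rpower (B / c) s).
  - apply Rmult_le_compat_l; [apply Rlt_le, Rdiv_lt_0_compat|]; assumption.
  - right. rewrite <- (exp_ln_minus A B), <- (exp_ln_minus B c) by assumption.
    unfold Rpower. rewrite !ln_exp, <- !exp_plus. f_equal. ring.
Qed.

Lemma sum_f_R0_SS (u : nat -> R) N :
  sum_f_R0 u (S (S N)) = u 0%nat + u 1%nat + sum_f_R0 (fun k => u (S (S k))) N.
Proof.
  rewrite decomp_sum by lia. cbn [Nat.pred].
  rewrite (decomp_sum (fun i => u (S i))) by lia. cbn [Nat.pred]. ring.
Qed.

Lemma sum_f_R0_two_step_geometric_le (u : nat -> R) r N :
  0 <= r < 1 -> (forall k, 0 <= u k <= 1) ->
  (forall k, (S (S k) <= N)%nat -> u (S (S k)) <= r * u k) ->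
  sum_f_R0 u N <= 2 / (1 - r).
Proof.
  intros Hr Hu Hstep.
  assert (Htwo : 2 <= 2 / (1 - r)).
  { apply (Rmult_le_reg_r (1 - r)); [lra|]. field_simplify; nra. }
  enough (H : forall M, (M <= N)%nat -> sum_f_R0 u M <= 2 / (1 - r)) by (apply H; lia).
  intros M. induction M as [M IH] using lt_wf_ind. intros HM.
  destruct M as [|[|M]].
  - simpl. pose proof (Hu 0%nat). lra.
  - simpl. pose proof (Hu 0%nat). pose proof (Hu 1%nat). lra.
  - rewrite sum_f_R0_SS.
    assert (Htail : sum_f_R0 (fun k => u (S (S k))) M <= r * sum_f_R0 u M).
    { rewrite scal_sum. apply sum_Rle. intros k Hk. rewrite Rmult_comm. apply Hstep. lia. }
    assert (Hrec : r * sum_f_R0 u M <= r * (2 / (1 - r))).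
    { apply Rmult_le_compat_l; [lra|]. apply IH; lia. }
    assert (Hgeo : 2 + r * (2 / (1 - r)) = 2 / (1 - r)) by (field; lra).
    pose proof (Hu 0%nat). pose proof (Hu 1%nat). lra.
Qed.

Lemma irrational_neq0 x : irrational x -> x <> 0.
Proof. intros Hx ->. apply Hx. exists 0%Z, 1%Z. split; [lia | simpl; field]. Qed.

Definition gauss (x : R) : R := / x - IZR (Int_part (/ x)).

Lemma gauss_bounds x : 0 <= gauss x < 1.
Proof. unfold gauss. destruct (base_Int_part (/ x)). lra. Qed.

Lemma gauss_irrational x : irrational x -> irrational (gauss x).
Proof.
  intros Hx [p [q [Hq Hpq]]]. apply Hx.
  pose proof (irrational_neq0 x Hx) as Hx0.
  unfold gauss in Hpq. set (z := Int_part (/ x)) in Hpq.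
  assert (Hq' : IZR q <> 0) by (apply not_0_IZR; exact Hq).
  assert (Hinv : / x = IZR (z * q + p) / IZR q).
  { rewrite plus_IZR, mult_IZR. replace (/ x) with (IZR z + IZR p / IZR q) by lra.
    field. exact Hq'. }
  assert (Hnum : IZR (z * q + p) <> 0).
  { intros Hzero. apply (Rinv_neq_0_compat x Hx0). rewrite Hinv, Hzero. field. exact Hq'. }
  exists q, (z * q + p)%Z. split.
  - intros Hzero. apply Hnum. now rewrite Hzero.
  - rewrite <- (Rinv_inv x), Hinv. field. now split.
Qed.

Lemma Int_part_inv_ge1 x : 0 < x < 1 -> 1 <= IZR (Int_part (/ x)).
Proof.
  intros Hx. destruct (base_Int_part (/ x)) as [_ Hlt].
  assert (1 < / x) by (rewrite <- Rinv_1; apply Rinv_lt_contravar; lra).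
  assert (Hpos : 0 < IZR (Int_part (/ x))) by lra.
  apply lt_IZR in Hpos. apply IZR_le. lia.
Qed.

Lemma mul_gauss_le_half x : 0 < x < 1 -> x * gauss x <= 1 / 2.
Proof.
  intros Hx. pose proof (Int_part_inv_ge1 x Hx) as Hk.
  destruct (base_Int_part (/ x)) as [_ Hlt]. unfold gauss.
  set (k := IZR (Int_part (/ x))) in *.
  assert (Hxinv : x * / x = 1) by (field; lra).
  (* [k <= 1/x < k + 1] gives [1 - x < k x <= 1], while [k >= 1] gives [k x >= x] *)
  rewrite Rmult_minus_distr_l, Hxinv. nra.
Qed.

Lemma cf_x_S rho n : cf_x rho (S n) = gauss (cf_x rho n).
Proof. reflexivity. Qed.

Definition cf_p_prev (rho : R) (n : nat) : R := fst (fst (cf_pq rho n)).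
Definition cf_q_prev (rho : R) (n : nat) : R := snd (fst (cf_pq rho n)).

Lemma cf_p_prev_S rho n : cf_p_prev rho (S n) = cf_p rho n.
Proof. unfold cf_p_prev, cf_p. cbn [cf_pq]. now destruct (cf_pq rho n) as [[a b] [c d]]. Qed.

Lemma cf_q_prev_S rho n : cf_q_prev rho (S n) = cf_q rho n.
Proof. unfold cf_q_prev, cf_q. cbn [cf_pq]. now destruct (cf_pq rho n) as [[a b] [c d]]. Qed.

Lemma cf_p_S rho n :
  cf_p rho (S n) = IZR (Int_part (/ cf_x rho n)) * cf_p rho n + cf_p_prev rho n.
Proof. unfold cf_p_prev, cf_p. cbn [cf_pq]. now destruct (cf_pq rho n) as [[a b] [c d]]. Qed.

Lemma cf_q_S rho n :
  cf_q rho (S n) = IZR (Int_part (/ cf_x rho n)) * cf_q rho n + cf_q_prev rho n.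
Proof. unfold cf_q_prev, cf_q. cbn [cf_pq]. now destruct (cf_pq rho n) as [[a b] [c d]]. Qed.

Lemma Delta_prev_eq rho n : Delta_prev rho n = Rabs (cf_q_prev rho n * rho - cf_p_prev rho n).
Proof. unfold Delta_prev, cf_q_prev, cf_p_prev. now destruct (cf_pq rho n) as [[a b] [c d]]. Qed.

Lemma Delta_prev_S rho n : Delta_prev rho (S n) = cf_Delta rho n.
Proof. now rewrite Delta_prev_eq, cf_p_prev_S, cf_q_prev_S. Qed.

Lemma cf_pq_int rho n :
  is_int (cf_p_prev rho n) /\ is_int (cf_q_prev rho n) /\ is_int (cf_p rho n) /\ is_int (cf_q rho n).
Proof.
  induction n as [|n (Hp' & Hq' & Hp & Hq)].
  - repeat split; [exists 1%Z | exists 0%Z | exists 0%Z | exists 1%Z]; reflexivity.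
  - rewrite cf_p_prev_S, cf_q_prev_S, cf_p_S, cf_q_S.
    assert (Hk : is_int (IZR (Int_part (/ cf_x rho n)))) by (eexists; reflexivity).
    repeat split; auto using is_int_plus, is_int_mult.
Qed.

Lemma in_D_lower_bound delta rho : in_D delta rho ->
  exists c, 0 < c /\ forall p q, is_int p -> is_int q -> 1 <= q ->
    c * Rpower (/ q) (1 + delta) <= Rabs (q * rho - p).
Proof.
  intros [_ [c [Hc HD]]]. exists c. split; [exact Hc|].
  intros p q [zp ->] [zq ->] Hq.
  assert (Hzq : (1 <= zq)%Z) by (apply le_IZR; exact Hq).
  pose proof (HD zp (Z.to_nat zq) ltac:(lia)) as Hbound.
  rewrite INR_IZR_INZ, Z2Nat.id in Hbound by lia.
  replace (IZR zq * rho - IZR zp) with (IZR zq * (rho - IZR zp / IZR zq)) by (field; lra).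
  rewrite Rabs_mult, (Rabs_pos_eq (IZR zq)) by lra.
  replace (Rpower (/ IZR zq) (1 + delta)) with (IZR zq * Rpower (IZR zq) (- 2 - delta)).
  - nra.
  - rewrite Rpower_inv, <- (Rpower_1 (IZR zq)) at 1 by lra.
    rewrite <- Rpower_plus. f_equal. ring.
Qed.

Section ContinuedFraction.

Variable rho : R.
Hypothesis rho_bounds : 0 < rho < 1.
Hypothesis rho_irrational : irrational rho.

Lemma cf_x_irrational n : irrational (cf_x rho n).
Proof. induction n; [exact rho_irrational | now apply gauss_irrational]. Qed.

Lemma cf_x_bounds n : 0 < cf_x rho n < 1.
Proof.
  destruct n as [|n]; [exact rho_bounds|].
  pose proof (gauss_bounds (cf_x rho n)).
  pose proof (irrational_neq0 _ (cf_x_irrational (S n))).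
  rewrite cf_x_S in *. lra.
Qed.

Lemma cf_x_neq0 n : cf_x rho n <> 0.
Proof. pose proof (cf_x_bounds n). lra. Qed.

Lemma cf_err_rec n :
  cf_q rho n * rho - cf_p rho n = - cf_x rho n * (cf_q_prev rho n * rho - cf_p_prev rho n).
Proof.
  induction n as [|n IH]; [cbv [cf_q cf_p cf_q_prev cf_p_prev cf_pq cf_x fst snd]; ring|].
  rewrite cf_p_S, cf_q_S, cf_p_prev_S, cf_q_prev_S, cf_x_S. unfold gauss.
  pose proof (cf_x_neq0 n) as Hx.
  set (x := cf_x rho n) in *. set (k := IZR (Int_part (/ x))).
  set (e := cf_q rho n * rho - cf_p rho n) in *.
  set (e' := cf_q_prev rho n * rho - cf_p_prev rho n) in *.
  replace ((k * cf_q rho n + cf_q_prev rho n) * rho - (k * cf_p rho n + cf_p_prev rho n))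
    with (k * e + e') by (unfold e, e'; ring).
  replace e' with (- e / x) by (rewrite IH; field; exact Hx).
  field. exact Hx.
Qed.

Lemma cf_Delta_eq n : cf_Delta rho n = cf_x rho n * Delta_prev rho n.
Proof.
  unfold cf_Delta. rewrite Delta_prev_eq, cf_err_rec, Rabs_mult, Rabs_Ropp.
  pose proof (cf_x_bounds n). now rewrite (Rabs_pos_eq (cf_x rho n)) by lra.
Qed.

Lemma Delta_prev_pos n : 0 < Delta_prev rho n.
Proof.
  induction n as [|n IH].
  - cbv [Delta_prev cf_pq]. rewrite Rabs_left; lra.
  - rewrite Delta_prev_S, cf_Delta_eq. pose proof (cf_x_bounds n). nra.
Qed.

Lemma cf_Delta_pos n : 0 < cf_Delta rho n.
Proof. rewrite <- Delta_prev_S. apply Delta_prev_pos. Qed.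

Lemma cf_Delta_S_le n : cf_Delta rho (S n) <= cf_Delta rho n.
Proof.
  rewrite cf_Delta_eq, Delta_prev_S. pose proof (cf_x_bounds (S n)). pose proof (cf_Delta_pos n). nra.
Qed.

Lemma cf_Delta_antitone m n : (m <= n)%nat -> cf_Delta rho n <= cf_Delta rho m.
Proof.
  induction 1 as [|n _ IH]; [lra|]. pose proof (cf_Delta_S_le n). lra.
Qed.

Lemma cf_Delta_SS_le_half n : cf_Delta rho (S (S n)) <= cf_Delta rho n / 2.
Proof.
  rewrite cf_Delta_eq, Delta_prev_S, cf_Delta_eq, Delta_prev_S.
  pose proof (mul_gauss_le_half _ (cf_x_bounds (S n))).
  pose proof (cf_x_bounds (S n)). pose proof (cf_x_bounds (S (S n))). pose proof (cf_Delta_pos n).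
  rewrite !cf_x_S in *. nra.
Qed.

Lemma cf_q_bounds n : 0 <= cf_q_prev rho n /\ 1 <= cf_q rho n.
Proof.
  induction n as [|n [Hq' Hq]]; [cbv [cf_q cf_q_prev cf_pq fst snd]; lra|].
  rewrite cf_q_prev_S, cf_q_S. pose proof (Int_part_inv_ge1 _ (cf_x_bounds n)). nra.
Qed.

Lemma cf_q_Delta n : cf_q rho n * Delta_prev rho n + cf_q_prev rho n * cf_Delta rho n = 1.
Proof.
  induction n as [|n IH]; [cbv [cf_q cf_q_prev Delta_prev cf_pq fst snd]; rewrite Rabs_left; lra|].
  rewrite cf_q_S, cf_q_prev_S, Delta_prev_S, (cf_Delta_eq (S n)), Delta_prev_S.
  rewrite cf_x_S. unfold gauss.
  pose proof (cf_x_neq0 n) as Hx. rewrite <- IH, (cf_Delta_eq n). field. exact Hx.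
Qed.

Lemma Delta_lower_bound delta : 0 <= delta -> in_D delta rho ->
  exists c, 0 < c /\ forall n, c * Rpower (Delta_prev rho n) (1 + delta) <= cf_Delta rho n.
Proof.
  intros Hdelta HD.
  destruct (in_D_lower_bound delta rho HD) as [c [Hc Hlow]]. exists c. split; [exact Hc|].
  intros n.
  destruct (cf_pq_int rho n) as (_ & _ & Hp & Hq).
  destruct (cf_q_bounds n) as [Hq'0 Hq1].
  pose proof (cf_q_Delta n) as Hid.
  pose proof (cf_Delta_pos n). pose proof (Delta_prev_pos n).
  assert (Hprev : Delta_prev rho n <= / cf_q rho n).
  { apply (Rmult_le_reg_l (cf_q rho n)); [lra|]. rewrite Rinv_r by lra. nra. }
  apply Rle_trans with (c * Rpower (/ cf_q rho n) (1 + delta)).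
  - apply Rmult_le_compat_l; [lra|]. apply Rle_Rpower_l; lra.
  - exact (Hlow _ _ Hp Hq Hq1).
Qed.

Lemma sum_Delta_ratio_Rpower_le a n : 0 < a ->
  sum_f_R0 (fun k => Rpower (cf_Delta rho n / cf_Delta rho (n - k)) a) n
  <= 2 / (1 - Rpower (/ 2) a).
Proof.
  intros Ha.
  pose proof cf_Delta_pos as Hpos.
  apply sum_f_R0_two_step_geometric_le.
  - split; [apply Rlt_le, Rpower_gt0|].
    rewrite <- (Rpower_1_l a). apply Rlt_Rpower_l; lra.
  - intros k. split; [apply Rlt_le, Rpower_gt0|].
    rewrite <- (Rpower_1_l a). apply Rle_Rpower_l; [lra|].
    pose proof (Hpos n). pose proof (Hpos (n - k)%nat).
    pose proof (cf_Delta_antitone (n - k) n ltac:(lia)).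
    split; [apply Rdiv_lt_0_compat; lra|].
    apply (Rmult_le_reg_r (cf_Delta rho (n - k))); [lra|]. field_simplify; lra.
  - intros k Hk. rewrite Rpower_mult_distr by (try apply Rdiv_lt_0_compat; auto; lra).
    apply Rle_Rpower_l; [lra|].
    pose proof (cf_Delta_SS_le_half (n - S (S k))) as Hhalf.
    replace (S (S (n - S (S k)))) with (n - k)%nat in Hhalf by lia.
    pose proof (Hpos n). pose proof (Hpos (n - k)%nat). pose proof (Hpos (n - S (S k))%nat).
    split; [apply Rdiv_lt_0_compat; lra|].
    unfold Rdiv. rewrite <- Rmult_assoc, (Rmult_comm (/ 2)), Rmult_assoc.
    apply Rmult_le_compat_l; [lra|]. rewrite <- Rinv_mult.
    apply Rinv_le_contravar; lra.
Qed.

End ContinuedFraction.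

Theorem lemma7 (delta rho sigma : R) :
  0 <= delta -> 0 < rho < 1 -> in_D delta rho ->
  0 <= sigma < 1 + delta ->
  exists C : R, forall n : nat,
    E_ns rho sigma n <= C * Rpower (cf_Delta rho n) (sigma / (1 + delta)).
Proof.
  intros Hdelta Hrho HD Hsigma.
  pose proof (proj1 HD) as Hirr.
  destruct (Delta_lower_bound rho Hrho Hirr delta Hdelta HD) as [c [Hc Hlow]].
  set (s := sigma / (1 + delta)).
  assert (Hs : 0 <= s < 1).
  { unfold s. split; [apply Rmult_le_pos; [lra | apply Rlt_le, Rinv_0_lt_compat; lra]|].
    apply (Rmult_lt_reg_r (1 + delta)); [lra|]. field_simplify; lra. }
  set (G := 2 / (1 - Rpower (/ 2) (1 - s))).
  exists (Rpower c (- s) * G). intros n. unfold E_ns.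
  set (Dn := cf_Delta rho n).
  apply Rle_trans with
    (sum_f_R0 (fun k => Rpower (Dn / cf_Delta rho (n - k)) (1 - s) * (Rpower c (- s) * Rpower Dn s)) n).
  - apply sum_Rle. intros k _.
    replace sigma with (s * (1 + delta)) at 1 by (unfold s; field; lra).
    apply div_mul_Rpower_le; try lra; unfold Dn; auto using cf_Delta_pos, Delta_prev_pos.
  - rewrite <- scal_sum.
    pose proof (sum_Delta_ratio_Rpower_le rho Hrho Hirr (1 - s) n ltac:(lra)) as Hsum.
    fold Dn G in Hsum.
    pose proof (Rpower_gt0 c (- s)). pose proof (Rpower_gt0 Dn s).
    replace (Rpower c (- s) * G * Rpower Dn s) with ((Rpower c (- s) * Rpower Dn s) * G) by ring.
    apply Rmult_le_compat_l; [nra | exact Hsum].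
Qed.
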